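(* Let $H\in\mathbb{R}^{n_z\times n_z}$ be symmetric positive definite, $F\in\mathbb{R}^{n_x\times n_z}$, $G\in\mathbb{R}^{n_c\times n_z}$, $S\in\mathbb{R}^{n_c\times n_x}$, $w\in\mathbb{R}^{n_c}$, and assume $\{z: Gz\le Sx+w\}\neq\emptyset$ for every $x\in\mathbb{R}^{n_x}$. Let $\kappa$ be a global Lipschitz constant and let $x,\hat{x}\in\mathbb{R}^{n_x}$. Let $v(\hat{x})=(\hat{x},z^*(\hat{x}))\in\mathbb{R}^{n_x+n_z}$, $$\mathbb{D}(x)=\{j\in\{1,\dots,n_c\}: \mathcal{B}(z^*(\hat{x}),\kappa\|x-\hat{x}\|)\subseteq\mathcal{Z}_j(x)\},$$ $$\mathbb{E}(x)=\{j\in\{1,\dots,n_c\}: \mathcal{B}(v(\hat{x}),\sqrt{1+\kappa^2}\,\|x-\hat{x}\|)\subseteq\mathcal{V}_j\}.$$ Then (a) $v(\hat{x})\in\mathcal{V}$, and (b) $\mathbb{E}(x)\subseteq\mathbb{D}(x)$.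
   Context: mp-QP$(x)$: minimize $V(z)=\frac12z^THz+x^TFz$ over $\mathcal{Z}(x)=\{z: Gz\le Sx+w\}$, with unique minimizer $z^*(x)$. $G_j,S_j$ are the $j$-th rows of $G,S$, $w_j$ the $j$-th entry of $w$, $\mathcal{Z}_j(x)=\{z: G_jz\le S_jx+w_j\}$. For $\mathbb{I}\subseteq\{1,\dots,n_c\}$, $z^*(x,\mathbb{I})$ is the unique minimizer of $V$ subject to only the constraints indexed by $\mathbb{I}$. A global Lipschitz constant is $\kappa\in\mathbb{R}$ with $\|z^*(x_1,\mathbb{I})-z^*(x_2,\mathbb{I})\|\le\kappa\|x_1-x_2\|$ for all $x_1,x_2$ and all $\mathbb{I}$. Lifted sets: with $\bar H=[-S,\;G]\in\mathbb{R}^{n_c\times(n_x+n_z)}$ and $\bar H_j$ its $j$-th row, $\mathcal{V}=\{v\in\mathbb{R}^{n_x+n_z}: \bar Hv\le w\}$ and $\mathcal{V}_j=\{v:\bar H_jv\le w_j\}$. $\mathcal{B}(q,r)$ is the closed Euclidean ball of radius $r$ centered at $q$. *)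

From HB Require Import structures.
From mathcomp Require Import all_boot all_order all_algebra.
From mathcomp Require Import reals.
Set Implicit Arguments. Unset Strict Implicit. Unset Printing Implicit Defensive.
Import Order.TTheory GRing.Theory Num.Theory.
Local Open Scope ring_scope.

Section Defs.
Variable R : realType.

Definition enorm (n : nat) (v : 'cV[R]_n) : R :=
  Num.sqrt (\sum_(i < n) v i 0 ^+ 2).

Definition ball_e (n : nat) (q : 'cV[R]_n) (r : R) (p : 'cV[R]_n) : Prop :=
  enorm (p - q) <= r.

Variables (nx nz nc : nat).

Definition spd (H : 'M[R]_nz) : Prop :=
  H^T = H /\ forall z : 'cV[R]_nz, z != 0 -> 0 < (z^T *m H *m z) 0 0.

Definition qp_obj (H : 'M[R]_nz) (F : 'M[R]_(nx, nz)) (x : 'cV[R]_nx)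
  (z : 'cV[R]_nz) : R :=
  (z^T *m H *m z) 0 0 / 2 + (x^T *m F *m z) 0 0.

Definition in_Zj (G : 'M[R]_(nc, nz)) (S : 'M[R]_(nc, nx)) (w : 'cV[R]_nc)
  (j : 'I_nc) (x : 'cV[R]_nx) (z : 'cV[R]_nz) : Prop :=
  (G *m z) j 0 <= (S *m x + w) j 0.

Definition feas_I G S w (I : {set 'I_nc}) x z : Prop :=
  forall j, j \in I -> in_Zj G S w j x z.

Definition is_zstar_I H F G S w (I : {set 'I_nc}) x z : Prop :=
  feas_I G S w I x z /\
  forall z', feas_I G S w I x z' -> qp_obj H F x z <= qp_obj H F x z'.

Definition is_zstar H F G S w x z : Prop := is_zstar_I H F G S w setT x z.

Definition global_lipschitz H F G S w (kappa : R) : Prop :=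
  forall (I : {set 'I_nc}) (x1 x2 : 'cV[R]_nx) (z1 z2 : 'cV[R]_nz),
    is_zstar_I H F G S w I x1 z1 -> is_zstar_I H F G S w I x2 z2 ->
    enorm (z1 - z2) <= kappa * enorm (x1 - x2).

Definition Hbar (G : 'M[R]_(nc, nz)) (S : 'M[R]_(nc, nx)) : 'M[R]_(nc, nx + nz) :=
  row_mx (- S) G.

Definition in_Vj G S (w : 'cV[R]_nc) (j : 'I_nc) (v : 'cV[R]_(nx + nz)) : Prop :=
  (Hbar G S *m v) j 0 <= w j 0.

Definition in_V G S (w : 'cV[R]_nc) (v : 'cV[R]_(nx + nz)) : Prop := forall j, in_Vj G S w j v.

Definition vlift (xh : 'cV[R]_nx) (zh : 'cV[R]_nz) : 'cV[R]_(nx + nz) := col_mx xh zh.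

(* D(x) and E(x), given zh = z*(xh) *)
Definition Dset G S (w : 'cV[R]_nc) (kappa : R) (x xh : 'cV[R]_nx) (zh : 'cV[R]_nz) (j : 'I_nc) : Prop :=
  forall z, ball_e zh (kappa * enorm (x - xh)) z -> in_Zj G S w j x z.

Definition Eset G S (w : 'cV[R]_nc) (kappa : R) (x xh : 'cV[R]_nx) (zh : 'cV[R]_nz) (j : 'I_nc) : Prop :=
  forall v, ball_e (vlift xh zh) (Num.sqrt (1 + kappa ^+ 2) * enorm (x - xh)) v ->
    in_Vj G S w j v.

End Defs.

From HB Require Import structures.
From mathcomp Require Import all_boot all_order all_algebra.
From mathcomp Require Import reals.
Import Order.TTheory GRing.Theory Num.Theory.
Local Open Scope ring_scope.

(* The lifted constraint row [-S_j, G_j] evaluated at (x, z) is G_j z - S_j x,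
   so [v(xh) \in V] is the feasibility of z*(xh), and a point (x, z) with z in the
   ball defining D(x) lies in the ball defining E(x): its squared distance to
   v(xh) is |x - xh|^2 + |z - z*(xh)|^2 <= (1 + kappa^2) |x - xh|^2. *)

Section LiftedConstraints.
Variables (R : realType) (nx nz nc : nat).

Lemma sumsq_ge0 {n} (v : 'cV[R]_n) : 0 <= \sum_(i < n) v i 0 ^+ 2.
Proof. by apply: sumr_ge0 => i _; exact: sqr_ge0. Qed.

Lemma enorm_ge0 {n} (v : 'cV[R]_n) : 0 <= enorm v.
Proof. exact: sqrtr_ge0. Qed.

Lemma enorm_col_mx (a : 'cV[R]_nx) (b : 'cV[R]_nz) :
  enorm (col_mx a b) = Num.sqrt (enorm a ^+ 2 + enorm b ^+ 2).
Proof.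
rewrite /enorm !sqr_sqrtr ?sumsq_ge0 // big_split_ord /=.
by congr (Num.sqrt (_ + _)); apply: eq_bigr => i _; rewrite ?col_mxEu ?col_mxEd.
Qed.

Lemma enorm_col_mx_le (k : R) (a : 'cV[R]_nx) (b : 'cV[R]_nz) :
  enorm b <= k * enorm a -> enorm (col_mx a b) <= Num.sqrt (1 + k ^+ 2) * enorm a.
Proof.
move=> hb; have ha0 := enorm_ge0 a; have hb0 := enorm_ge0 b.
rewrite enorm_col_mx -[X in _ * X]ger0_norm // -sqrtr_sqr -sqrtrM ?addr_ge0 ?sqr_ge0 //.
rewrite ler_sqrt ?mulr_ge0 ?addr_ge0 ?sqr_ge0 // mulrDl mul1r lerD2l -exprMn.
by apply: lerXn2r; rewrite // nnegrE (le_trans hb0 hb).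
Qed.

Lemma Hbar_mul_col_mx (G : 'M[R]_(nc, nz)) (S : 'M[R]_(nc, nx))
  (x : 'cV[R]_nx) (z : 'cV[R]_nz) :
  Hbar G S *m col_mx x z = G *m z - S *m x.
Proof. by rewrite /Hbar mul_row_col mulNmx addrC. Qed.

Lemma in_Vj_vlift G S (w : 'cV[R]_nc) j (x : 'cV[R]_nx) (z : 'cV[R]_nz) :
  in_Vj G S w j (vlift x z) <-> in_Zj G S w j x z.
Proof. by rewrite /in_Vj /in_Zj /vlift Hbar_mul_col_mx !mxE lerBlDr addrC. Qed.

Lemma ball_e_vlift (kappa : R) (x xh : 'cV[R]_nx) (z zh : 'cV[R]_nz) :
  ball_e zh (kappa * enorm (x - xh)) z ->
  ball_e (vlift xh zh) (Num.sqrt (1 + kappa ^+ 2) * enorm (x - xh)) (vlift x z).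
Proof. by rewrite /ball_e /vlift opp_col_mx add_col_mx; exact: enorm_col_mx_le. Qed.

End LiftedConstraints.

Theorem lemma5 (R : realType) (nx nz nc : nat)
  (H : 'M[R]_nz) (F : 'M[R]_(nx, nz)) (G : 'M[R]_(nc, nz))
  (S : 'M[R]_(nc, nx)) (w : 'cV[R]_nc)
  (hH : spd H)
  (hfeas : forall x : 'cV[R]_nx, exists z : 'cV[R]_nz,
             forall j : 'I_nc, in_Zj G S w j x z)
  (kappa : R) (hkappa : global_lipschitz H F G S w kappa)
  (x xh : 'cV[R]_nx) (zh : 'cV[R]_nz) (hzh : is_zstar H F G S w xh zh) :
  in_V G S w (vlift xh zh) /\
  (forall j : 'I_nc, Eset G S w kappa x xh zh j -> Dset G S w kappa x xh zh j).
Proof.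
split=> [j | j hE z hz]; apply/in_Vj_vlift.
  exact: (proj1 hzh) j (in_setT j).
exact/hE/ball_e_vlift.
Qed.
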